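(* Let $G$ be a graph such that (i) $G[N[v]]$ is a unit interval graph for every $v\in V(G)$, (ii) $G$ has no induced subgraph isomorphic to $C_{n+4}\cup K_1$ for any $n\ge0$, and (iii) there are no $v,w\in V(G)$ with $N[v]\subsetneq N[w]$. Then $G$ has no induced subgraph isomorphic to the net.
   Context: A unit interval graph is an intersection graph of unit-length intervals on the real line. $C_m$ is the cycle of length $m$, $K_1$ a single vertex, $\cup$ disjoint union. The net is the graph on $v_1,v_2,v_3,w_1,w_2,w_3$ with edges $v_1v_2,v_1v_3,v_2v_3,v_1w_1,v_2w_2,v_3w_3$. $N[v]$ is the closed neighborhood. *)

From Stdlib Require Import Reals.
From mathcomp Require Import all_boot.
Set Implicit Arguments. Unset Strict Implicit. Unset Printing Implicit Defensive.

Definition simple_graph (T : finType) (e : rel T) : Prop :=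
  symmetric e /\ irreflexive e.

Definition cnbhd (T : finType) (e : rel T) (v : T) : {set T} :=
  [set w | (w == v) || e v w].

(* The induced subgraph G[S] is a unit interval graph: there is an assignment
   of closed unit intervals [f x, f x + 1] (x in S) on the real line such that
   distinct vertices of S are adjacent iff their intervals intersect. *)
Definition unit_interval_on (T : finType) (e : rel T) (S : {set T}) : Prop :=
  exists f : T -> R, forall u w, u \in S -> w \in S -> u != w ->
    (e u w <-> Rle (Rabs (Rminus (f u) (f w))) R1).

Definition has_induced (T : finType) (e : rel T) (V : finType) (h : rel V) : Prop :=
  exists phi : V -> T, injective phi /\
    forall x y, x != y -> e (phi x) (phi y) = h x y.

(* The cycle C_m on 'I_m (meaningful for m >= 3). *)
Definition cycle_rel (m : nat) : rel 'I_m :=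
  fun i j => (j == (i.+1 %% m) :> nat) || (i == (j.+1 %% m) :> nat).

Definition cycle_plus_K1_rel (m : nat) : rel (option 'I_m) :=
  fun x y => match x, y with
             | Some i, Some j => cycle_rel i j
             | _, _ => false
             end.

(* The net on 'I_6: v1,v2,v3 = 0,1,2 ; w1,w2,w3 = 3,4,5.
   Edges v1v2, v1v3, v2v3, v1w1, v2w2, v3w3. *)
Definition net_edge (a b : nat) : bool :=
  [|| (a == 0) && (b == 1), (a == 0) && (b == 2), (a == 1) && (b == 2),
      (a == 0) && (b == 3), (a == 1) && (b == 4) | (a == 2) && (b == 5)].

Definition net_rel : rel 'I_6 :=
  fun i j => net_edge i j || net_edge j i.

From Stdlib Require Import Reals Lra.
From mathcomp Require Import all_boot zify.
Set Implicit Arguments. Unset Strict Implicit.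

(* Since N[r_K] is not properly contained in N[r_{K-1}], the end r_K of an
   induced path r_0 ... r_K has a neighbour x outside N[r_{K-1}].  The net gives
   two induced paths w_2 v_2 v_1 w_1 and w_3 v_3 v_1 w_1 sharing the trunk v_1 w_1.
   Such an x has no other neighbour on either path: a last chord x r_j would close
   an induced cycle of length at least 4, and the tip of the other branch would be
   an isolated vertex beside it, as it cannot be adjacent to x (it would form a
   claw at x with r_j and r_K, impossible in the unit interval graph G[N[x]]).
   Hence both paths extend by x forever, contradicting finiteness. *)


Local Open Scope R_scope.

Lemma no_three_far_points_near (u a b c : R) :
  Rabs (u - a) <= 1 -> Rabs (u - b) <= 1 -> Rabs (u - c) <= 1 ->
  ~ Rabs (b - a) <= 1 -> ~ Rabs (c - a) <= 1 -> ~ Rabs (c - b) <= 1 -> False.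
Proof.
unfold Rabs; repeat match goal with |- context [Rcase_abs ?x] => destruct (Rcase_abs x) end; lra.
Qed.

Local Close Scope R_scope.

Section NetFree.

Variables (T : finType) (e : rel T).
Hypothesis e_sym : symmetric e.
Hypothesis e_irr : irreflexive e.
Hypothesis local_unit_interval : forall v, unit_interval_on e (cnbhd e v).
Hypothesis no_cycle_plus_K1 : forall n, ~ has_induced e (@cycle_plus_K1_rel (n + 4)).
Hypothesis no_proper_cnbhd : ~ (exists v w : T, cnbhd e v \proper cnbhd e w).

Lemma claw_free u a b c : e u a -> e u b -> e u c ->
  a \notin cnbhd e b -> a \notin cnbhd e c -> b \notin cnbhd e c -> False.
Proof.
move=> ua ub uc ab ac bc.
have [f f_unit] := local_unit_interval u.
have in_u y : e u y -> y \in cnbhd e u by rewrite inE => ->; rewrite orbT.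
have u_in : u \in cnbhd e u by rewrite inE eqxx.
have near y : e u y -> Rle (Rabs (f u - f y)) 1.
  move=> uy; have uy_neq : u != y by apply: contraTneq uy => <-; rewrite e_irr.
  exact: (f_unit u y u_in (in_u y uy) uy_neq).1.
have far y z : e u y -> e u z -> y \notin cnbhd e z -> ~ Rle (Rabs (f z - f y)) 1.
  move=> uy uz; rewrite inE negb_or => /andP[yz /negP zy] near_zy; apply: zy.
  by apply/(f_unit z y (in_u z uz) (in_u y uy)); rewrite // eq_sym.
exact: (no_three_far_points_near (near a ua) (near b ub) (near c uc)
          (far a b ua ub ab) (far a c ua uc ac) (far b c ub uc bc)).
Qed.

Record induced_path (K : nat) (p : nat -> T) : Prop := InducedPath {
  induced_path_inj : forall i j, i <= K -> j <= K -> p i = p j -> i = j;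
  induced_path_adj : forall i j, i <= K -> j <= K ->
    e (p i) (p j) = (i == j.+1) || (j == i.+1) }.

Lemma induced_path_lt_card K p : induced_path K p -> K < #|T|.
Proof.
case=> p_inj _; pose q (i : 'I_K.+1) := p i.
have q_inj : injective q.
  by move=> i j /p_inj eq_ij; apply/val_inj/eq_ij; rewrite -ltnS.
by have := leq_card q q_inj; rewrite card_ord.
Qed.

Lemma mem_cnbhd_path K p i j : induced_path K p -> i <= K -> j <= K ->
  (p j \in cnbhd e (p i)) = [|| j == i, i == j.+1 | j == i.+1].
Proof.
case=> p_inj p_adj le_i le_j; rewrite inE p_adj //; congr (_ || _).
by apply/eqP/eqP => [/p_inj->|->].
Qed.

Lemma induced_path_shift K p j : induced_path K p -> j <= K ->
  induced_path (K - j) (fun i => p (j + i)).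
Proof.
case=> p_inj p_adj le_jK; split=> [a b le_a le_b /p_inj|a b le_a le_b]; first lia.
by rewrite p_adj; [rewrite -!addnS !eqn_add2l|lia|lia].
Qed.

Lemma induced_path_snoc K p x : induced_path K p ->
  (forall m, m <= K -> x != p m) -> (forall m, m <= K -> e x (p m) = (m == K)) ->
  induced_path K.+1 (fun i => if i == K.+1 then x else p i).
Proof.
case=> p_inj p_adj x_off x_adj; split=> i j le_i le_j.
  case: eqP => [->|/eqP ne_i]; case: eqP => [->|/eqP ne_j] //.
  - move=> eq_x; have le_jK : j <= K by lia.
    by move: (x_off j le_jK); rewrite eq_x eqxx.
  - move=> eq_x; have le_iK : i <= K by lia.
    by move: (x_off i le_iK); rewrite eq_x eqxx.
  - by apply: p_inj; lia.
case: eqP => [->|/eqP ne_i]; case: eqP => [->|/eqP ne_j].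
- by rewrite e_irr; lia.
- by rewrite x_adj; lia.
- by rewrite e_sym x_adj; lia.
- by rewrite p_adj; lia.
Qed.

Lemma induced_cycle_plus_K1 m (c : nat -> T) z :
  (forall i j, i < m -> j < m -> c i = c j -> i = j) ->
  (forall i j, i < m -> j < m -> e (c i) (c j) = (j == i.+1 %% m) || (i == j.+1 %% m)) ->
  (forall i, i < m -> z \notin cnbhd e (c i)) ->
  has_induced e (@cycle_plus_K1_rel m).
Proof.
move=> c_inj c_adj z_far; exists (fun o : option 'I_m => if o is Some i then c i else z); split.
  case=> [i|] [j|] //=.
  - by move/c_inj => eq_ij; congr Some; apply/val_inj/eq_ij.
  - by move=> eq_z; move: (z_far i (ltn_ord i)); rewrite -eq_z inE eqxx.
  - by move=> eq_z; move: (z_far j (ltn_ord j)); rewrite eq_z inE eqxx.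
have z_nadj i : i < m -> e (c i) z = false.
  by move/z_far; rewrite inE negb_or => /andP[_ /negbTE].
case=> [i|] [j|] _ //=; first exact: c_adj.
- exact: z_nadj.
- by rewrite e_sym; exact: z_nadj.
Qed.

Lemma closed_path_cycle_plus_K1 n q x z :
  induced_path n.+2 q ->
  (forall i, i <= n.+2 -> x != q i) ->
  (forall i, i <= n.+2 -> e x (q i) = (i == 0) || (i == n.+2)) ->
  z \notin cnbhd e x -> (forall i, i <= n.+2 -> z \notin cnbhd e (q i)) ->
  has_induced e (@cycle_plus_K1_rel (n + 4)).
Proof.
move=> [q_inj q_adj] x_off x_adj z_x z_q.
pose c i := if i <= n.+2 then q i else x.
have c_top i : i < n + 4 -> ~~ (i <= n.+2) -> i = n.+3 by lia.
have modS i : i < n + 4 -> i.+1 %% (n + 4) = if i <= n.+2 then i.+1 else 0.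
  move=> lt_i; case: ifP => [le_i|/negbT/(c_top _ lt_i)->]; first by rewrite modn_small; lia.
  by rewrite -addn4 addnC modnn.
apply: (@induced_cycle_plus_K1 _ c z) => [i j lt_i lt_j|i j lt_i lt_j|i lt_i]; rewrite /c.
- case: ifP => [le_i|/negbT/(c_top _ lt_i)->]; case: ifP => [le_j|/negbT/(c_top _ lt_j)->] //.
  + exact: q_inj.
  + by move=> eq_x; move: (x_off i le_i); rewrite eq_x eqxx.
  + by move=> eq_x; move: (x_off j le_j); rewrite eq_x eqxx.
- rewrite !modS //.
  case: ifP => [le_i|/negbT/(c_top _ lt_i)->]; case: ifP => [le_j|/negbT/(c_top _ lt_j)->].
  + by rewrite q_adj // orbC.
  + by rewrite e_sym x_adj //; lia.
  + by rewrite x_adj //; lia.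
  + by rewrite e_irr.
- by case: ifP => [/z_q|].
Qed.

Lemma cnbhd_subset_sym v w : cnbhd e v \subset cnbhd e w -> cnbhd e w \subset cnbhd e v.
Proof.
move=> sub_vw; apply/negPn/negP => not_sub_wv; apply: no_proper_cnbhd.
by exists v, w; rewrite properE sub_vw.
Qed.

Lemma path_end_private_neighbour K p :
  induced_path K p -> 2 <= K ->
  exists2 x, e (p K) x & x \notin cnbhd e (p K.-1).
Proof.
move=> P le2K.
have /subsetPn[x xK xK1] : ~~ (cnbhd e (p K) \subset cnbhd e (p K.-1)).
  apply/negP => /cnbhd_subset_sym/subsetP/(_ (p K.-2)).
  by rewrite !(mem_cnbhd_path P) //; lia.
exists x => //; move: xK; rewrite inE => /orP[/eqP x_pK|//].
by move: xK1; rewrite x_pK (mem_cnbhd_path P) //; lia.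
Qed.

Lemma private_neighbour_off_path K p x : induced_path K p ->
  e (p K) x -> x \notin cnbhd e (p K.-1) -> forall m, m <= K -> x != p m.
Proof.
move=> P pKx xK1 m le_mK; apply: contraNneq xK1 => x_pm.
move: pKx; rewrite x_pm (mem_cnbhd_path P) ?(induced_path_adj P) //; lia.
Qed.

Lemma private_neighbour_adj K p x :
  e (p K) x -> x \notin cnbhd e (p K.-1) -> (forall j, j <= K - 2 -> ~~ e x (p j)) ->
  forall m, m <= K -> e x (p m) = (m == K).
Proof.
move=> pKx xK1 no_chord m le_mK.
have [->|ne_mK] := eqVneq m K; first by rewrite e_sym.
have [->|ne_mK1] := eqVneq m K.-1.
  by move: xK1; rewrite inE negb_or e_sym => /andP[_ /negbTE->].
by rewrite (negbTE (no_chord m _)) //; lia.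
Qed.

Record fork K (r s : nat -> T) : Prop := Fork {
  fork_len : 3 <= K;
  fork_pathl : induced_path K r;
  fork_pathr : induced_path K s;
  fork_trunk : forall i, 1 < i -> r i = s i;
  fork_tipl : forall m, m <= K -> r 0 \notin cnbhd e (s m);
  fork_tipr : forall m, m <= K -> s 0 \notin cnbhd e (r m) }.

Lemma fork_sym K r s : fork K r s -> fork K s r.
Proof. by case=> len Pr Ps trunk tipl tipr; split=> // i /trunk. Qed.

Lemma fork_no_chord K r s x j : fork K r s ->
  e (r K) x -> x \notin cnbhd e (r K.-1) -> j <= K - 2 -> ~~ e x (r j).
Proof.
move=> F rKx xK1 le_j; apply/negP => x_rj.
have [lenK Pr _ _ _ s0_far] := F.
have chord_ex : exists j, (j <= K - 2) && e x (r j) by exists j; rewrite le_j x_rj.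
have chord_ub i : (i <= K - 2) && e x (r i) -> i <= K - 2 by case/andP.
case: (ex_maxnP chord_ex chord_ub) => j0 /andP[le_j0 x_rj0] max_j0.
have lenE : (K - j0 - 2).+2 = K - j0 by lia.
have x_off := private_neighbour_off_path Pr rKx xK1.
have s0_x : s 0 \notin cnbhd e x.
  rewrite inE negb_or; apply/andP; split.
    by apply: contraNneq (s0_far K (leqnn K)) => ->; rewrite inE rKx orbT.
  have x_rK : e x (r K) by rewrite e_sym.
  apply/negP => x_s0; apply: (claw_free x_s0 x_rj0 x_rK).
  - by apply: s0_far; lia.
  - by apply: s0_far.
  - by rewrite (mem_cnbhd_path Pr) //; lia.
apply: (@no_cycle_plus_K1 (K - j0 - 2)).
apply: (closed_path_cycle_plus_K1 (q := fun i => r (j0 + i)) (x := x)) s0_x _; rewrite lenE.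
- by apply: induced_path_shift Pr _; lia.
- by move=> i le_i; apply: x_off; lia.
- move=> i le_i; have [->|i_pos] := posnP i; first by rewrite addn0 x_rj0.
  have [->|ne_i] := eqVneq i (K - j0).
    by rewrite subnKC ?eqxx ?orbT; [rewrite e_sym | lia].
  have [eq_K1|ne_K1] := eqVneq (j0 + i) K.-1.
    by move: xK1; rewrite eq_K1 inE negb_or e_sym => /andP[_ /negbTE->]; lia.
  apply/negbTE/negP => x_ri; have := max_j0 (j0 + i); rewrite x_ri andbT; lia.
- by move=> i le_i; apply: s0_far; lia.
Qed.

Lemma fork_extend K r s : fork K r s -> exists r' s', fork K.+1 r' s'.
Proof.
move=> F; have [lenK Pr Ps trunk tipl tipr] := F.
have [x rKx xK1] := path_end_private_neighbour Pr (ltnW lenK).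
have sKx : e (s K) x by rewrite -trunk //; lia.
have xsK1 : x \notin cnbhd e (s K.-1) by rewrite -trunk //; lia.
have x_r := private_neighbour_adj rKx xK1 (fun j => fork_no_chord (j := j) F rKx xK1).
have x_s := private_neighbour_adj sKx xsK1
  (fun j => fork_no_chord (j := j) (fork_sym F) sKx xsK1).
have x_offr := private_neighbour_off_path Pr rKx xK1.
have x_offs := private_neighbour_off_path Ps sKx xsK1.
exists (fun i => if i == K.+1 then x else r i), (fun i => if i == K.+1 then x else s i).
split=> [||||m le_m|m le_m].
- exact: leqW.
- exact: induced_path_snoc.
- exact: induced_path_snoc.
- by move=> i /trunk ->.
- case: ifP => [_|/negbT ne_m]; last by apply: tipl; lia.
  by rewrite inE negb_or eq_sym x_offr // x_r //; lia.
- case: ifP => [_|/negbT ne_m]; last by apply: tipr; lia.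
  by rewrite inE negb_or eq_sym x_offs // x_s //; lia.
Qed.

Lemma fork_of_net : has_induced e net_rel -> exists r s, fork 3 r s.
Proof.
case=> phi [phi_inj phi_adj].
pose v1 := @Ordinal 6 0 isT; pose v2 := @Ordinal 6 1 isT; pose v3 := @Ordinal 6 2 isT.
pose w1 := @Ordinal 6 3 isT; pose w2 := @Ordinal 6 4 isT; pose w3 := @Ordinal 6 5 isT.
exists (fun i => phi (nth w1 [:: w2; v2; v1] i)), (fun i => phi (nth w1 [:: w3; v3; v1] i)).
split=> //.
- by split=> [|] [|[|[|[|i]]]] [|[|[|[|j]]]] //= _ _;
    rewrite ?e_irr ?phi_adj // => /phi_inj/(congr1 val).
- by split=> [|] [|[|[|[|i]]]] [|[|[|[|j]]]] //= _ _;
    rewrite ?e_irr ?phi_adj // => /phi_inj/(congr1 val).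
- by case=> [|[|[|i]]].
- by case=> [|[|[|[|m]]]] //= _; rewrite inE negb_or (inj_eq phi_inj) phi_adj.
- by case=> [|[|[|[|m]]]] //= _; rewrite inE negb_or (inj_eq phi_inj) phi_adj.
Qed.

End NetFree.

Theorem mainTheorem17 (T : finType) (e : rel T) :
  simple_graph e ->
  (forall v : T, unit_interval_on e (cnbhd e v)) ->
  (forall n : nat, ~ has_induced e (@cycle_plus_K1_rel (n + 4))) ->
  ~ (exists v w : T, cnbhd e v \proper cnbhd e w) ->
  ~ has_induced e net_rel.
Proof.
move=> [e_sym e_irr] unit_int no_cycle no_proper /(fork_of_net e_irr) [r [s F]].
have long_fork k : exists r s, fork e (k + 3) r s.
  elim: k => [|k [r' [s' F']]]; first by exists r, s.
  exact: (fork_extend e_sym e_irr unit_int no_cycle no_proper F').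
have [r' [s' /fork_pathl/induced_path_lt_card]] := long_fork #|T|.
by rewrite ltnNge leq_addr.
Qed.
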